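(* Let $k\le n<q$ be integers with $q$ a prime power and $q>(n/k)^2$. Let $C$ be a Reed-Solomon code of dimension $k$ and block length $n$ over $\mathbb{F}_q$. Then for at least a $1-q^{-\Omega(k)}$ fraction of error patterns $e\in\mathbb{F}_q^n$ of Hamming weight at most $n-4k$, and for any codeword $c\in C$, the only codeword of $C$ that agrees with $c+e$ in at least $4k$ positions is $c$.
   Context: A Reed-Solomon code of dimension $k$ and block length $n$ over $\mathbb{F}_q$ is the set $\{(f(\alpha_1),\dots,f(\alpha_n)) : f\in\mathbb{F}_q[X],\ \deg f<k\}$ for fixed distinct evaluation points $\alpha_1,\dots,\alpha_n\in\mathbb{F}_q$. The Hamming weight of a vector is its number of nonzero coordinates; two vectors agree in a position if their coordinates there are equal. *)

From mathcomp Require Import all_boot all_order all_algebra all_field.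
Set Implicit Arguments. Unset Strict Implicit. Unset Printing Implicit Defensive.
Import GRing.Theory.
Local Open Scope ring_scope.

Section RS.
Variables (F : finFieldType) (n k : nat) (alpha : 'I_n -> F).

Definition word := {ffun 'I_n -> F}.

Definition rs_poly (a : {ffun 'I_k -> F}) : {poly F} :=
  \sum_(j < k) (a j)%:P * 'X^j.

Definition rs_encode (a : {ffun 'I_k -> F}) : word :=
  [ffun i => (rs_poly a).[alpha i]].

Definition RScode : {set word} :=
  [set c : word | [exists a : {ffun 'I_k -> F}, c == rs_encode a]].

Definition hweight (e : word) : nat := #|[set i : 'I_n | e i != 0]|.

Definition agreement (x y : word) : nat := #|[set i : 'I_n | x i == y i]|.

Definition addw (x y : word) : word := [ffun i => x i + y i].

Definition good_error (e : word) : bool :=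
  [forall c in RScode, forall c' in RScode,
     ((4 * k <= agreement c' (addw c e))%N ==> (c' == c))].

Definition low_weight_errors : {set word} :=
  [set e : word | (hweight e + 4 * k <= n)%N].

Definition bad_errors : {set word} :=
  [set e in low_weight_errors | ~~ good_error e].

End RS.

From mathcomp Require Import all_boot all_order all_algebra all_field.
From mathcomp Require Import zify ring.
Set Implicit Arguments. Unset Strict Implicit. Unset Printing Implicit Defensive.
Import GRing.Theory.

(* If c + e agrees with another codeword c' on 4k positions, then e agrees with
   the nonzero codeword c' - c there, and since c' - c has fewer than k zeros,
   e equals a nowhere-zero codeword on some 3k-set T. For a fixed codeword and
   T, overwriting e on T by arbitrary nonzero values preserves the weight and is
   injective, so at most a (q-1)^(-3k) fraction of the low-weight errors agree
   with it on T. A union bound over the q^k C(n,3k) pairs, C(n,t) <= (3n/t)^t and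
   (n/k)^2 < q bound the bad fraction by 2^(3k) q^(-k/2) <= q^(-k/4) once
   q >= 2^12. *)

Lemma card_bigcup_leq (T I : finType) (P : {pred I}) (A : I -> {set T}) :
  #|\bigcup_(i in P) A i| <= \sum_(i in P) #|A i|.
Proof.
elim/big_rec2: _ => [|i B s _ IH]; first by rewrite cards0.
by rewrite (leq_trans (leq_card_setU _ _)) // leq_add2l.
Qed.

Lemma exists_subset_card (T : finType) (A : {set T}) t :
  t <= #|A| -> exists2 B : {set T}, B \subset A & #|B| = t.
Proof.
elim: t => [|t IH] ltA; first by exists set0; rewrite ?sub0set ?cards0.
have [B sBA cardB] := IH (ltnW ltA).
have : 0 < #|A :\: B| by rewrite cardsD (setIidPr sBA) cardB subn_gt0.
case/card_gt0P => x; rewrite in_setD => /andP [xNB xA].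
exists (x |: B); first by rewrite subUset sub1set xA sBA.
by rewrite cardsU1 xNB cardB.
Qed.

Section Words.
Variables (F : finFieldType) (n : nat).
Local Notation word := (word F n).

Definition support (e : word) : {set 'I_n} := [set i | e i != 0%R].

Definition agree_on (T : {set 'I_n}) (v : word) : {set word} :=
  [set e : word | [forall i in T, e i == v i]].

Lemma card_nonzero_on (T : {set 'I_n}) :
  #|[set u : word | [forall i, if i \in T then u i != 0%R else u i == 1%R]]|
  = #|F|.-1 ^ #|T|.
Proof.
pose G i : pred F := if i \in T then predC1 0%R else pred1 1%R.
have -> : [set u : word | [forall i, if i \in T then u i != 0%R else u i == 1%R]]
          = [set u in family G].
  apply/setP => u; rewrite !inE; apply/forallP/familyP => uG i; have := uG i;
    by rewrite /G; case: (i \in T).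
rewrite cardsE card_family foldrE big_image /= (bigID (mem T)) /=.
rewrite (eq_bigr (fun _ => #|F|.-1)) => [|i iT]; last by rewrite /G iT cardC1.
by rewrite prod_nat_const big1 ?muln1 // => i iNT; rewrite /G (negbTE iNT) card1.
Qed.

Lemma card_agree_on_leq (S : {set word}) (T : {set 'I_n}) (v : word) :
  (forall e e', support e = support e' -> (e \in S) = (e' \in S)) ->
  {in T, forall i, v i != 0%R} ->
  #|S :&: agree_on T v| * #|F|.-1 ^ #|T| <= #|S|.
Proof.
move=> S_supp vT.
rewrite -card_nonzero_on -cardsX.
pose overwrite (p : word * word) : word :=
  [ffun i => if i \in T then p.2 i else p.1 i].
rewrite -(card_in_imset (f := overwrite)); last first.
  move=> [e u] [e' u']; rewrite !inE /= => /andP [/andP [_ /forall_inP eT] /forallP uT]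
    /andP [/andP [_ /forall_inP e'T] /forallP u'T] /ffunP eq_ow.
  congr pair; apply/ffunP => i; have := eq_ow i; rewrite !ffunE /=;
    case: (boolP (i \in T)) => [iT | iNT] // _.
  - by rewrite (eqP (eT i iT)) (eqP (e'T i iT)).
  - by have := uT i; have := u'T i; rewrite (negbTE iNT) => /eqP -> /eqP ->.
apply/subset_leq_card/subsetP => _ /imsetP [[e u] + ->].
rewrite !inE /= => /andP [/andP [eS /forall_inP eT] /forallP uT].
rewrite (S_supp _ e) // /support; apply/setP => i; rewrite !inE ffunE /=.
have := uT i; case: (boolP (i \in T)) => [iT /negbTE -> | //].
by rewrite (eqP (eT i iT)) vT.
Qed.

Lemma low_weight_errors_support k (e e' : word) : support e = support e' ->
  (e \in low_weight_errors F n k) = (e' \in low_weight_errors F n k).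
Proof. by rewrite !inE /hweight /support => ->. Qed.

End Words.

Section ReedSolomon.
Variables (F : finFieldType) (n k : nat) (alpha : 'I_n -> F).
Hypothesis alpha_inj : injective alpha.

Lemma size_rs_poly (a : {ffun 'I_k -> F}) : size (rs_poly a) <= k.
Proof.
apply/leq_sizeP => j kj; rewrite /rs_poly coef_sum big1 // => i _.
rewrite coefCM coefXn.
have /negbTE -> : j != i by rewrite neq_ltn (leq_trans (ltn_ord i) kj) orbT.
by rewrite mulr0.
Qed.

Lemma rs_encodeB (a a' : {ffun 'I_k -> F}) i :
  rs_encode alpha [ffun j => a' j - a j]%R i =
  (rs_encode alpha a' i - rs_encode alpha a i)%R.
Proof.
rewrite !ffunE -hornerN -hornerD; congr horner.
rewrite /rs_poly -sumrN -big_split /=; apply: eq_bigr => j _.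
by rewrite ffunE polyCB mulrBl.
Qed.

Lemma card_rs_encode_zeros (a : {ffun 'I_k -> F}) : rs_poly a != 0%R ->
  #|[set i | rs_encode alpha a i == 0%R]| < k.
Proof.
move=> a_nz; apply: leq_trans (size_rs_poly a).
rewrite cardE -(size_map alpha) max_poly_roots //.
  by apply/allP => _ /mapP [i iZ ->]; move: iZ; rewrite mem_enum inE ffunE.
by rewrite map_inj_uniq ?enum_uniq.
Qed.

Definition nonzero_patterns : {set {ffun 'I_k -> F} * {set 'I_n}} :=
  [set p : {ffun 'I_k -> F} * {set 'I_n} |
    (#|p.2| == 3 * k) && [forall i in p.2, rs_encode alpha p.1 i != 0%R]].

Lemma bad_errors_sub :
  bad_errors k alpha \subset
  \bigcup_(p in nonzero_patterns)
    (low_weight_errors F n k :&: agree_on p.2 (rs_encode alpha p.1)).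
Proof.
apply/subsetP => e; rewrite inE => /andP [e_low].
case/forall_inPn => _ /[!inE] /existsP [a /eqP ->].
case/forall_inPn => _ /[!inE] /existsP [a' /eqP ->].
rewrite negb_imply => /andP [agree_4k neq_cw].
set b := [ffun j => a' j - a j]%R.
have b_nz : rs_poly b != 0%R.
  apply: contra neq_cw => /eqP b0; apply/eqP/ffunP => i; apply/eqP.
  by rewrite -subr_eq0 -rs_encodeB ffunE b0 horner0.
set G := [set i | rs_encode alpha a' i == addw (rs_encode alpha a) e i].
set Z := [set i | rs_encode alpha b i == 0%R].
have : 3 * k <= #|G :\: Z|.
  have := card_rs_encode_zeros b_nz; rewrite -/Z cardsD.
  have : #|G :&: Z| <= #|Z| by rewrite subset_leq_card ?subsetIr.
  rewrite /agreement -/G in agree_4k; lia.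
case/exists_subset_card => T sT cardT.
have eT i : i \in T -> rs_encode alpha b i = e i /\ e i != 0%R.
  move/(subsetP sT); rewrite !inE rs_encodeB => /andP [e_nz /eqP a'E].
  by rewrite a'E [addw _ _ _]ffunE addrAC subrr add0r in e_nz *.
apply/bigcupP; exists (b, T).
  by rewrite inE cardT eqxx; apply/forall_inP => i /eT [->].
by rewrite inE e_low inE; apply/forall_inP => i /eT [->].
Qed.

Lemma bad_errors_count :
  #|bad_errors k alpha| * #|F|.-1 ^ (3 * k)
    <= #|F| ^ k * 'C(n, 3 * k) * #|low_weight_errors F n k|.
Proof.
have card_patterns : #|nonzero_patterns| <= #|F| ^ k * 'C(n, 3 * k).
  have -> : #|F| ^ k * 'C(n, 3 * k) =
            #|setX [set: {ffun 'I_k -> F}] [set T : {set 'I_n} | #|T| == 3 * k]|.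
    by rewrite cardsX cardsT card_ffun !card_ord card_draws card_ord.
  by apply/subset_leq_card/subsetP => p; rewrite !inE => /andP [->].
pose A (p : {ffun 'I_k -> F} * {set 'I_n}) :=
  low_weight_errors F n k :&: agree_on p.2 (rs_encode alpha p.1).
apply: leq_trans _ (leq_mul card_patterns (leqnn _)).
apply: (@leq_trans ((\sum_(p in nonzero_patterns) #|A p|) * #|F|.-1 ^ (3 * k))).
  rewrite leq_mul2r (leq_trans (subset_leq_card bad_errors_sub)) ?orbT //.
  exact: card_bigcup_leq.
rewrite -sum1_card !big_distrl leq_sum // => p.
rewrite inE => /andP [/eqP <- /forall_inP p_nz].
by rewrite /= mul1n card_agree_on_leq // => e e'; apply: low_weight_errors_support.
Qed.

End ReedSolomon.

Lemma bin_fact_leq n t : 'C(n, t) * t`! <= n ^ t.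
Proof.
rewrite bin_ffact ffact_prod -[t in n ^ t]card_ord -prod_nat_const.
by apply: leq_prod => i _; apply: leq_subr.
Qed.

From Stdlib Require Import Reals Lra.
(* Reals rebinds [_ ^ _] on nat to [Nat.pow] and [ring] to the Stdlib tactic. *)
From mathcomp Require Import ssrnat ring.

Lemma INR_expn m e : INR (m ^ e) = (INR m ^ e)%R.
Proof. by elim: e => [|e IH] //; rewrite expnS -multE mult_INR IH. Qed.

Lemma pow_lt_compat_l (a b : R) e :
  (0 <= a < b)%R -> (0 < e)%N -> (a ^ e < b ^ e)%R.
Proof.
move=> ab; elim: e => [|[|e] IH] e_gt0; [by [] | by rewrite !pow_1; lra |].
rewrite -(tech_pow_Rmult a) -(tech_pow_Rmult b).
apply: Rmult_le_0_lt_compat; [lra | apply: pow_le; lra | lra | exact: IH].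
Qed.

Lemma pow_le_reg_l (a b : R) e :
  (0 <= b)%R -> (0 < e)%N -> (a ^ e <= b ^ e)%R -> (a <= b)%R.
Proof.
move=> b_ge0 e_gt0 ab; apply: Rnot_lt_le => ba.
by have := pow_lt_compat_l (conj b_ge0 ba) e_gt0; lra.
Qed.

Lemma one_add_inv_pow_le3 t : (0 < t)%N -> ((1 + / INR t) ^ t <= 3)%R.
Proof.
move=> t_gt0; have tR_gt0 : (0 < INR t)%R by apply: lt_0_INR; apply/ltP.
have inv_gt0 := Rinv_0_lt_compat _ tR_gt0.
apply: Rle_trans exp_le_3.
have -> : exp 1 = (exp (/ INR t) ^ t)%R.
  rewrite -Rpower_pow; last exact: exp_pos.
  by rewrite /Rpower ln_exp Rinv_r //; lra.
apply: pow_incr; split; [lra | exact: exp_ineq1_le].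
Qed.

Lemma succ_expn_leq t : t.+1 ^ t <= 3 * t ^ t.
Proof.
case: t => [|t] //; apply/leP/INR_le.
rewrite -multE mult_INR !INR_expn S_INR.
have tR_gt0 : (0 < INR t.+1)%R by apply: lt_0_INR; apply/ltP.
have -> : (INR t.+1 + 1 = INR t.+1 * (1 + / INR t.+1))%R.
  by rewrite Rmult_plus_distr_l Rmult_1_r Rinv_r //; lra.
rewrite Rpow_mult_distr Rmult_comm; apply: Rmult_le_compat_r.
  by apply: pow_le; lra.
by have := one_add_inv_pow_le3 (ltn0Sn t); rewrite /= /INR; lra.
Qed.

Lemma expn_self_leq_fact t : t ^ t <= 3 ^ t * t`!.
Proof.
elim: t => [|t IH] //; rewrite expnS factS.
apply: leq_trans (leq_mul (leqnn t.+1) (succ_expn_leq t)) _.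
apply: leq_trans (leq_mul (leqnn t.+1) (leq_mul (leqnn 3) IH)) _.
by rewrite expnS; apply: eq_leq; ring.
Qed.

Lemma bin_expn_leq n t : 'C(n, t) * t ^ t <= (3 * n) ^ t.
Proof.
rewrite expnMn; apply: leq_trans _ (leq_mul (leqnn _) (bin_fact_leq n t)).
by rewrite mulnCA leq_mul2l expn_self_leq_fact orbT.
Qed.

Lemma union_bound_sq_leq n k q X Y : 0 < k -> n * n < q * (k * k) ->
  X * q.-1 ^ (3 * k) <= q ^ k * 'C(n, 3 * k) * Y ->
  (X * q.-1 ^ (3 * k)) ^ 2 <= q ^ (5 * k) * Y ^ 2.
Proof.
move=> k_gt0 nq count; set t := 3 * k.
have t_gt0 : 0 < t by rewrite muln_gt0 k_gt0.
have count_t : X * q.-1 ^ t * t ^ t <= q ^ k * Y * (3 * n) ^ t.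
  apply: leq_trans (leq_mul count (leqnn (t ^ t))) _.
  have -> : q ^ k * 'C(n, t) * Y * t ^ t = q ^ k * Y * ('C(n, t) * t ^ t) by ring.
  by rewrite leq_mul2l bin_expn_leq orbT.
have sq_3n : ((3 * n) ^ t) ^ 2 <= q ^ t * (t ^ t) ^ 2.
  have -> : ((3 * n) ^ t) ^ 2 = ((3 * n) ^ 2) ^ t by rewrite -!expnM (mulnC t).
  have -> : q ^ t * (t ^ t) ^ 2 = (q * t ^ 2) ^ t by rewrite expnMn -!expnM (mulnC t).
  rewrite leq_exp2r // /t; lia.
have -> : q ^ (5 * k) = (q ^ k) ^ 2 * q ^ t by rewrite -expnM -expnD; congr expn; lia.
rewrite -(leq_pmul2r (_ : 0 < (t ^ t) ^ 2)) ?expn_gt0 ?t_gt0 // -expnMn.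
apply: leq_trans (_ : _ <= (q ^ k * Y * (3 * n) ^ t) ^ 2) _; first by rewrite leq_exp2r.
rewrite (expnMn (q ^ k * Y)) (expnMn (q ^ k)).
have -> : (q ^ k) ^ 2 * q ^ t * Y ^ 2 * (t ^ t) ^ 2 =
  (q ^ k) ^ 2 * Y ^ 2 * (q ^ t * (t ^ t) ^ 2) by ring.
by rewrite leq_mul2l sq_3n orbT.
Qed.

Lemma pow4_leq k q X Y : 0 < k -> 2 ^ 12 <= q ->
  (X * q.-1 ^ (3 * k)) ^ 2 <= q ^ (5 * k) * Y ^ 2 -> X ^ 4 * q ^ k <= Y ^ 4.
Proof.
move=> k_gt0 q_big sq.
have q_gt0 : 0 < q by apply: leq_trans q_big.
have qk_gt0 e : 0 < q ^ e by rewrite expn_gt0 q_gt0.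
have half : X ^ 2 * q ^ k <= 2 ^ (6 * k) * Y ^ 2.
  rewrite -(leq_pmul2r (qk_gt0 (5 * k))).
  have -> : X ^ 2 * q ^ k * q ^ (5 * k) = (X * q ^ (3 * k)) ^ 2.
    by rewrite expnMn -mulnA -expnD -expnM; congr (_ * q ^ _); lia.
  apply: leq_trans (_ : _ <= (X * (2 * q.-1) ^ (3 * k)) ^ 2) _.
    by rewrite leq_sqr leq_mul2l leq_exp2r ?muln_gt0 //; lia.
  have -> : 2 ^ (6 * k) = (2 ^ (3 * k)) ^ 2 by rewrite -expnM mulnAC.
  have -> : (X * (2 * q.-1) ^ (3 * k)) ^ 2 =
            (2 ^ (3 * k)) ^ 2 * (X * q.-1 ^ (3 * k)) ^ 2 by rewrite !expnMn; ring.
  by rewrite -mulnA leq_mul2l [Y ^ 2 * _]mulnC sq orbT.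
rewrite -(leq_pmul2r (qk_gt0 k)).
have -> : X ^ 4 * q ^ k * q ^ k = (X ^ 2 * q ^ k) ^ 2 by rewrite expnMn -expnM; ring.
apply: leq_trans (_ : _ <= (2 ^ (6 * k) * Y ^ 2) ^ 2) _; first by rewrite leq_sqr.
have -> : (2 ^ (6 * k) * Y ^ 2) ^ 2 = (2 ^ 12) ^ k * Y ^ 4.
  by rewrite expnMn -!expnM; congr (2 ^ _ * _); lia.
by rewrite mulnC leq_mul2l leq_exp2r // q_big orbT.
Qed.

Lemma pow4_leq_Rpower q k X Y : 0 < q -> X ^ 4 * q ^ k <= Y ^ 4 ->
  (INR X <= Rpower (INR q) (- (/ 4 * INR k)) * INR Y)%R.
Proof.
move=> q_gt0 XY.
have qR_gt0 : (0 < INR q)%R by apply: lt_0_INR; apply/ltP.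
set r := Rpower (INR q) (/ 4 * INR k).
have r_gt0 : (0 < r)%R by apply: exp_pos.
have r4 : (r ^ 4 = INR q ^ k)%R.
  rewrite -Rpower_pow // Rpower_mult -Rpower_pow //; congr Rpower.
  by rewrite [INR 4]/=; lra.
rewrite Rpower_Ropp -/r; apply: (Rmult_le_reg_l r) => //.
rewrite -Rmult_assoc Rinv_r ?Rmult_1_l; last lra.
apply: (pow_le_reg_l (pos_INR Y) (isT : 0 < 4)).
rewrite Rpow_mult_distr r4 -!INR_expn -mult_INR multE mulnC.
by apply/le_INR/leP.
Qed.

Theorem corollary3p2 :
  exists c : R, (0 < c)%R /\
  exists k0 : nat,
  forall (F : finFieldType) (n k : nat) (alpha : 'I_n -> F),
    injective alpha ->
    (k0 <= k)%N -> (k <= n)%N -> (n < #|F|)%N ->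
    (n * n < #|F| * (k * k))%N ->
    (INR #|@bad_errors F n k alpha|
       <= Rpower (INR #|F|) (- (c * INR k)) * INR #|low_weight_errors F n k|)%R.
Proof.
exists (/ 4)%R; split; first lra.
exists (2 ^ 12) => F n k alpha alpha_inj k_big k_le_n n_lt_q nk_q.
have k_gt0 : 0 < k by apply: leq_trans k_big.
have q_big : 2 ^ 12 <= #|F| by apply: leq_trans (ltnW (leq_ltn_trans k_le_n n_lt_q)).
apply: pow4_leq_Rpower; first by apply: leq_trans q_big.
apply: (pow4_leq k_gt0 q_big); apply: (union_bound_sq_leq k_gt0 nk_q).
exact: bad_errors_count.
Qed.
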